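(* For a ReLU MLP with parameter vector $w\in\mathbb{R}^p$, define $B=\{w_0\in\mathbb{R}^p : \text{there exist a hidden neuron }(l,i),\ 1\le l\le L,\ 1\le i\le n_l,\ \text{and a nonempty open set } \mathcal{U}\subseteq\mathbb{R}^{n_0} \text{ with } z_l(x;w_0)_i=0 \text{ for all } x\in\mathcal{U}\}$. Then $B$ has Lebesgue measure zero in $\mathbb{R}^p$.
   Context: A ReLU multilayer perceptron (MLP) with $L$ hidden layers and widths $n_0,n_1,\dots,n_L,n_{L+1}$ has parameters $w=(W_0,b_0,W_1,b_1,\dots,W_L,b_L)\in\mathbb{R}^p$ with $W_l\in\mathbb{R}^{n_{l+1}\times n_l}$, $b_l\in\mathbb{R}^{n_{l+1}}$ (all entries concatenated into one vector of length $p$). For $x\in\mathbb{R}^{n_0}$ set $h_0(x;w)=x$ and for $l=1,\dots,L$ define the pre-activations $z_l(x;w)=W_{l-1}h_{l-1}(x;w)+b_{l-1}\in\mathbb{R}^{n_l}$ and activations $h_l(x;w)=\sigma(z_l(x;w))$, where $\sigma(t)=\max(t,0)$ is applied elementwise; the output is $f(x;w)=W_Lh_L(x;w)+b_L$. *)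

From HB Require Import structures.
From mathcomp Require Import all_boot all_order all_algebra.
From mathcomp Require Import all_classical all_reals all_analysis.
Set Implicit Arguments. Unset Strict Implicit. Unset Printing Implicit Defensive.
Import Order.TTheory GRing.Theory Num.Theory.
Import numFieldNormedType.Exports.
Local Open Scope classical_set_scope.
Local Open Scope ring_scope.

(* A ReLU MLP with L hidden layers and widths n 0, n 1, ..., n L.+1
   (only these values of n : nat -> nat matter).
   Parameter coordinates: for each layer l < L.+1, the entries (i,j) of
   W_l : n (l+1) x n l  (tag inl) and the entries i of b_l : n (l+1) (tag inr).
   The parameter space R^p is R^(mlp_index L n), a finite type of cardinality p. *)
Definition mlp_index (L : nat) (n : nat -> nat) : finType :=
  {l : 'I_L.+1 & ('I_(n l.+1) * 'I_(n l) + 'I_(n l.+1))%type}.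

Definition mlp_param (R : realType) (L : nat) (n : nat -> nat) :=
  mlp_index L n -> R.

Section MLP.
Variables (R : realType) (L : nat) (n : nat -> nat).

(* entry (i,j) of W_l, read as 0 outside the index range *)
Definition Wt (w : mlp_param R L n) (l i j : nat) : R :=
  match (insub l : option 'I_L.+1) with
  | Some l' =>
      match (insub i : option 'I_(n (val l').+1)),
            (insub j : option 'I_(n (val l'))) with
      | Some i', Some j' => w (existT _ l' (inl (i', j')))
      | _, _ => 0
      end
  | None => 0
  end.

(* entry i of b_l, read as 0 outside the index range *)
Definition bias (w : mlp_param R L n) (l i : nat) : R :=
  match (insub l : option 'I_L.+1) with
  | Some l' =>
      match (insub i : option 'I_(n (val l').+1)) with
      | Some i' => w (existT _ l' (inr i'))
      | None => 0
      end
  | None => 0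
  end.

(* input coordinate j of x, 0 outside range *)
Definition inp (x : 'rV[R]_(n 0)) (j : nat) : R :=
  match (insub j : option 'I_(n 0)) with
  | Some j' => x ord0 j'
  | None => 0
  end.

(* activations h_l(x;w) (coordinates indexed by nat, i < n l meaningful) *)
Fixpoint act (w : mlp_param R L n) (x : 'rV[R]_(n 0)) (l : nat) : nat -> R :=
  match l with
  | 0 => inp x
  | k.+1 => fun i =>
      Num.max (\sum_(j < n k) Wt w k i j * act w x k j + bias w k i) 0
  end.

(* pre-activation z_l(x;w)_i = (W_{l-1} h_{l-1} + b_{l-1})_i, for 1 <= l *)
Definition preact (w : mlp_param R L n) (x : 'rV[R]_(n 0)) (l i : nat) : R :=
  \sum_(j < n l.-1) Wt w l.-1 i j * act w x l.-1 j + bias w l.-1 i.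

End MLP.

Definition lebesgue_null (R : realType) (I : finType) (B : set (I -> R)) : Prop :=
  forall eps : R, 0 < eps ->
    exists a b : nat -> I -> R,
      (forall k i, a k i <= b k i) /\
      (B `<=` \bigcup_k [set w | forall i, a k i <= w i <= b k i]) /\
      (forall N, \sum_(k < N) \prod_(i : I) (b k i - a k i) <= eps).

From HB Require Import structures.
From mathcomp Require Import all_boot all_order all_algebra.
From mathcomp Require Import all_classical all_reals all_analysis.
From mathcomp Require Import ring lra.
Import Order.TTheory GRing.Theory Num.Theory.
Import numFieldNormedType.Exports.
Local Open Scope classical_set_scope.
Local Open Scope ring_scope.

(* Fix an input x and a hidden neuron (l, i).  The equation z_l(x;w)_i = 0
   reads b_{l-1,i} = -(W_{l-1} h_{l-1}(x;w))_i, whose right-hand side does not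
   involve b_{l-1,i} and, being built from affine maps and the 1-Lipschitz
   ReLU, is Lipschitz in the remaining parameters on every bounded set.  The
   solutions therefore lie on the graph of a locally Lipschitz function of the
   other coordinates, which is covered by grid boxes of arbitrarily small total
   volume.  Finally, a nonempty open set of inputs contains a point with
   rational coordinates, so B lies in a countable union of such graphs. *)

Section BoxCovers.
Context {R : realType} {I : finType}.
Implicit Types (S : set (I -> R)) (a b : I -> R).

Definition box a b : set (I -> R) := [set w | forall i, a i <= w i <= b i].

Definition box_vol a b : R := \prod_i (b i - a i).

Lemma box_vol_ge0 a b : (forall i, a i <= b i) -> 0 <= box_vol a b.
Proof. by move=> ab; apply: prodr_ge0 => i _; rewrite subr_ge0. Qed.

Lemma lebesgue_null_sub S S' : S `<=` S' -> lebesgue_null S' -> lebesgue_null S.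
Proof.
move=> SS' nullS' eps e0; have [a [b [ab [cov vol]]]] := nullS' eps e0.
by exists a, b; split=> //; split=> //; apply: subset_trans cov.
Qed.

Lemma ler_sum_uniq_sub [T : eqType] [F : T -> R] [s r : seq T] :
  (forall t, 0 <= F t) -> uniq s -> uniq r -> {subset s <= r} ->
  \sum_(t <- s) F t <= \sum_(t <- r) F t.
Proof.
move=> F0 us ur sr; rewrite [X in _ <= X](bigID (mem s)) /=.
have -> : \sum_(t <- r | t \in s) F t = \sum_(t <- s) F t.
  rewrite -big_filter; apply/perm_big/uniq_perm; rewrite ?filter_uniq // => t.
  by rewrite mem_filter andb_idr //; apply: sr.
by rewrite lerDl sumr_ge0.
Qed.

(* With [I] empty every box has volume [1] and not even [set0] is null,
   hence the point [i0 : I] below. *)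
Lemma lebesgue_null_countable (i0 : I) S :
  (forall eps, 0 < eps -> exists (T : countType) (a b : T -> I -> R),
    [/\ forall t i, a t i <= b t i, S `<=` \bigcup_t box (a t) (b t) &
        forall s, uniq s -> \sum_(t <- s) box_vol (a t) (b t) <= eps]) ->
  lebesgue_null S.
Proof.
move=> cover eps e0; have [T [a [b [ab Scov vol]]]] := cover eps e0.
pose pad (c : T -> I -> R) k := oapp c (fun=> 0) (pickle_inv k).
exists (pad a), (pad b); split; [|split].
- by move=> k i; rewrite /pad; case: (pickle_inv k) => //= t; apply: ab.
- move=> w /Scov [t _ wt]; exists (pickle t) => //.
  by rewrite /pad pickleK_inv.
- move=> N; change (\sum_(k < N) box_vol (pad a k) (pad b k) <= eps).
  have padE k : box_vol (pad a k) (pad b k) =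
                oapp (fun t => box_vol (a t) (b t)) 0 (pickle_inv k).
    by rewrite /pad; case: (pickle_inv k) => //=; rewrite /box_vol (bigD1 i0) //= subrr mul0r.
  under eq_bigr do rewrite padE.
  rewrite -(big_mkord xpredT (fun k => oapp _ 0 (pickle_inv k))) -big_pmap.
  apply: vol.
  exact/(pmap_uniq (@pickle_invK T))/iota_uniq.
Qed.

Lemma lebesgue_null_finite (i0 : I) S :
  (forall eps, 0 < eps -> exists (T : finType) (a b : T -> I -> R),
    [/\ forall t i, a t i <= b t i, S `<=` \bigcup_t box (a t) (b t) &
        \sum_t box_vol (a t) (b t) <= eps]) ->
  lebesgue_null S.
Proof.
move=> cover; apply: (lebesgue_null_countable i0) => eps e0.
have [T [a [b [ab Scov vol]]]] := cover eps e0; exists T, a, b; split=> // s us.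
apply: le_trans vol; apply: ler_sum_uniq_sub => //.
- by move=> t; apply: box_vol_ge0.
- exact: index_enum_uniq.
- by move=> t _; rewrite mem_index_enum.
Qed.

Lemma lebesgue_null0 (i0 : I) : lebesgue_null (@set0 (I -> R)).
Proof.
apply: (lebesgue_null_finite i0) => eps e0.
by exists void, (fun=> fun=> 0), (fun=> fun=> 0); split=> //; rewrite big1 ?ltW //; case.
Qed.

Lemma sum_geometric_half P : \sum_(m < P) 2 ^- m.+1 = 1 - 2 ^- P :> R.
Proof.
elim: P => [|P IH]; first by rewrite big_ord0 expr0 invr1 subrr.
rewrite big_ord_recr /= IH exprS invfM.
have h2 : (2:R) != 0 by rewrite pnatr_eq0.
by field.
Qed.

Lemma lebesgue_null_bigcup_nat (i0 : I) (S : nat -> set (I -> R)) :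
  (forall m, lebesgue_null (S m)) -> lebesgue_null (\bigcup_m S m).
Proof.
move=> nullS; apply: (lebesgue_null_countable i0) => eps e0.
have em m : 0 < eps * 2 ^- m.+1 by rewrite mulr_gt0 // invr_gt0 exprn_gt0.
have /choice[c cP] : forall m, exists c : (nat -> I -> R) * (nat -> I -> R),
    [/\ forall k i, c.1 k i <= c.2 k i, S m `<=` \bigcup_k box (c.1 k) (c.2 k) &
        forall N, \sum_(k < N) box_vol (c.1 k) (c.2 k) <= eps * 2 ^- m.+1].
  by move=> m; have [a [b [? [? ?]]]] := nullS m _ (em m); exists (a, b).
exists (nat * nat)%type, (fun t => (c t.1).1 t.2), (fun t => (c t.1).2 t.2); split.
- by move=> [m k] i; have [+ _ _] := cP m; apply.
- move=> w [m _ Smw]; have [_ cov _] := cP m.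
  by have [k _ wk] := cov w Smw; exists (m, k).
- move=> s us; pose P := (\max_(t <- s) maxn t.1 t.2).+1.
  have sP : {subset s <= [seq (m, k) | m <- iota 0 P, k <- iota 0 P]}.
    move=> [m k] mks; have := @leq_bigmax_seq _ s xpredT (fun t => maxn t.1 t.2) _ mks isT.
    rewrite geq_max => /andP[mP kP].
    by apply: allpairs_f; rewrite mem_iota add0n ltnS.
  apply: le_trans (ler_sum_uniq_sub _ us _ sP) _.
  + by move=> [m k]; apply: box_vol_ge0 => i; have [+ _ _] := cP m; apply.
  + by apply: allpairs_uniq; rewrite ?iota_uniq // => -[? ?] [? ?].
  rewrite big_allpairs -/(index_iota 0 P) big_mkord.
  apply: (@le_trans _ _ (\sum_(m < P) eps * 2 ^- m.+1)).
    apply: ler_sum => m _; rewrite -/(index_iota 0 P) big_mkord.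
    by have [_ _] := cP m; apply.
  by rewrite -mulr_sumr sum_geometric_half ler_piMr ?ltW // gerBl invr_ge0 exprn_ge0.
Qed.

Lemma lebesgue_null_bigcup (i0 : I) (T : countType) (S : T -> set (I -> R)) :
  (forall t, lebesgue_null (S t)) -> lebesgue_null (\bigcup_t S t).
Proof.
move=> nullS; pose S' m := if pickle_inv m is Some t then S t else set0.
apply: (@lebesgue_null_sub _ (\bigcup_m S' m)).
  by move=> w [t _ Stw]; exists (pickle t) => //; rewrite /S' pickleK_inv.
apply: (lebesgue_null_bigcup_nat i0) => m; rewrite /S'.
by case: (pickle_inv m) => [t|]; [apply: nullS | apply: lebesgue_null0].
Qed.


Lemma grid_cell (c d y : R) (M : nat) : 0 < d -> c <= y <= c + M.+1%:R * d ->
  exists j : 'I_M.+1, c + j%:R * d <= y <= c + j%:R * d + d.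
Proof.
move=> d0 /andP[cy yM]; pose t := (y - c) / d.
have t0 : 0 <= t by rewrite divr_ge0 ?subr_ge0 // ltW.
have tM : t <= M.+1%:R by rewrite ler_pdivrMr // lerBlDl.
suff [j /andP[jt tj]] : exists j : 'I_M.+1, j%:R <= t <= j%:R + 1.
  exists j; move: jt tj; rewrite ler_pdivlMr // ler_pdivrMr // mulrDl mul1r.
  by move=> jt tj; apply/andP; split; lra.
have /andP[kt tk] := truncn_itv t0; rewrite -natr1 in tk.
case: (leqP (Num.truncn t) M) => [kM|Mk].
  by exists (Ordinal (kM : (Num.truncn t < M.+1)%N)); rewrite kt ltW.
exists ord_max; apply/andP; split; last by rewrite natr1.
by apply: le_trans kt; rewrite ler_nat ltnW.
Qed.

Definition cube_off (k0 : I) (B : R) : set (I -> R) :=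
  [set w | forall t, t != k0 -> `|w t| <= B].

Definition close_off (k0 : I) (d : R) (w v : I -> R) : Prop :=
  forall t, t != k0 -> `|w t - v t| <= d.

Definition lipschitz_off (k0 : I) (B : R) (G : (I -> R) -> R) (K : R) : Prop :=
  forall w v d, cube_off k0 B w -> cube_off k0 B v -> 0 <= d ->
    close_off k0 d w v -> `|G w - G v| <= K * d.

Lemma cube_off_grid_cell {k0 : I} {B d : R} {M : nat} {w : I -> R} :
  0 < d -> M.+1%:R * d = 2 * B -> cube_off k0 B w ->
  exists f : {ffun I -> 'I_M.+1}, f k0 = ord0 /\ forall t, t != k0 ->
    - B + (f t)%:R * d <= w t <= - B + (f t)%:R * d + d.
Proof.
move=> d0 Md wB.
have /choice[g gP] : forall t, exists j : 'I_M.+1,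
    t != k0 -> - B + j%:R * d <= w t <= - B + j%:R * d + d.
  move=> t; have [->|tk0] := eqVneq t k0; first by exists ord0.
  have [j jP] : exists j : 'I_M.+1, - B + j%:R * d <= w t <= - B + j%:R * d + d.
    apply: grid_cell => //; rewrite Md.
    by have := wB t tk0; rewrite ler_norml => /andP[]; lra.
  by exists j.
exists [ffun t => if t == k0 then ord0 else g t]; rewrite ffunE eqxx.
by split=> // t tk0; rewrite ffunE (negbTE tk0); apply: gP.
Qed.

(* Side lengths of grid boxes: in the direction [k0] only the index [ord0]
   gets the positive height [h], so all other boxes are degenerate. *)
Definition grid_len (k0 : I) (h d : R) {M : nat} (t : I) (j : 'I_M.+1) : R :=
  if t == k0 then (if j == ord0 then h else 0) else d.

Lemma sum_prod_grid_len (k0 : I) (h d : R) (M : nat) :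
  \sum_(f : {ffun I -> 'I_M.+1}) \prod_t grid_len k0 h d t (f t) =
  h * \prod_(t | t != k0) (M.+1%:R * d).
Proof.
rewrite -bigA_distr_bigA (bigD1 k0) //=; congr (_ * _).
  by rewrite big_ord_recl /grid_len eqxx /= big1 ?addr0.
apply: eq_bigr => t tk0.
by rewrite /grid_len (negbTE tk0) sumr_const card_ord mulr_natl.
Qed.

Lemma lipschitz_graph_cube_null (k0 : I) (G : (I -> R) -> R) (B K : R) :
  0 < B -> 0 <= K -> lipschitz_off k0 B G K ->
  lebesgue_null [set w | w k0 = G w /\ cube_off k0 B w].
Proof.
move=> B0 K0 GK; apply: (lebesgue_null_finite k0) => eps e0.
pose C := \prod_(t | t != k0) (2 * B).
pose M := Num.truncn (4 * K * B * C / eps).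
pose d := 2 * B / M.+1%:R.
have d0 : 0 < d by rewrite divr_gt0 // mulr_gt0.
have Md : M.+1%:R * d = 2 * B by rewrite mulrC divfK.
pose len := grid_len k0 (2 * K * d) d (M := M).
have len0 t j : 0 <= len t j.
  rewrite /len /grid_len; case: ifP => _; last exact: ltW.
  by case: ifP => _ //; rewrite !mulr_ge0 // ltW.
pose c (f : {ffun I -> 'I_M.+1}) t := - B + (f t)%:R * d.
(* Over the cell with corner [c f] the graph stays within [K * d] of [G (c f)]. *)
pose a f t := if t == k0 then G (c f) - K * d else c f t.
exists {ffun I -> 'I_M.+1}, a, (fun f t => a f t + len t (f t)); split.
- by move=> f t; rewrite lerDl len0.
- move=> w [wG wB]; have [f [fk0 fE]] := cube_off_grid_cell d0 Md wB.
  have cB : cube_off k0 B (c f).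
    move=> t tk0; have /andP[cw wc] := fE t tk0.
    have /andP[wl wu] : - B <= w t <= B by rewrite -ler_norml wB.
    have ft0 : 0 <= (f t)%:R * d by rewrite mulr_ge0 // ltW.
    by rewrite /c ler_norml; apply/andP; split; lra.
  have wc : close_off k0 d w (c f).
    move=> t tk0; have /andP[? ?] := fE t tk0.
    by rewrite /c ler_norml; apply/andP; split; lra.
  exists f => // t; rewrite /a /len /grid_len; have [->|tk0] := eqVneq t k0.
    have := GK w (c f) d wB cB (ltW d0) wc.
    by rewrite fk0 eqxx wG ler_norml => /andP[? ?]; apply/andP; split; lra.
  exact: fE.
- have volE f : box_vol (a f) (fun t => a f t + len t (f t)) = \prod_t len t (f t).
    by apply: eq_bigr => t _; rewrite addrC addKr.
  under eq_bigr do rewrite volE.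
  rewrite sum_prod_grid_len Md.
  have -> : 2 * K * d * C = 4 * K * B * C / M.+1%:R.
    by rewrite /d; field; rewrite addrC natr1 pnatr_eq0.
  rewrite ler_pdivrMr ?ltr0Sn // [eps * _]mulrC; apply: ltW.
  by rewrite -ltr_pdivrMr // truncnS_gt.
Qed.

Lemma lipschitz_graph_null (k0 : I) (G : (I -> R) -> R) :
  (forall B, 0 < B -> exists2 K, 0 <= K & lipschitz_off k0 B G K) ->
  lebesgue_null [set w | w k0 = G w].
Proof.
move=> GK; apply: (@lebesgue_null_sub _
  (\bigcup_(M : nat) [set w | w k0 = G w /\ cube_off k0 M.+1%:R w])).
  move=> w wG; exists (Num.truncn (\sum_t `|w t|)) => //; split=> // t _.
  apply: le_trans (ltW (truncnS_gt _)).
  by rewrite (bigD1 t) //= lerDl sumr_ge0.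
apply: (lebesgue_null_bigcup_nat k0) => M.
have M0 : 0 < M.+1%:R :> R by rewrite ltr0Sn.
have [K K0 GKM] := GK _ M0.
exact: lipschitz_graph_cube_null M0 K0 GKM.
Qed.

Definition coordinate_off (k0 : I) (phi : (I -> R) -> R) : Prop :=
  (forall w, phi w = 0) \/ exists2 t, t != k0 & forall w, phi w = w t.

Lemma coordinate_off_bound k0 phi B w :
  0 <= B -> coordinate_off k0 phi -> cube_off k0 B w -> `|phi w| <= B.
Proof. by move=> B0 [->|[t tk0 ->]] wB; [rewrite normr0 | apply: wB]. Qed.

Lemma coordinate_off_dist k0 phi d w v :
  0 <= d -> coordinate_off k0 phi -> close_off k0 d w v -> `|phi w - phi v| <= d.
Proof. by move=> d0 [phi0|[t tk0 phiE]] wv; rewrite ?phi0 ?subrr ?normr0 // !phiE wv. Qed.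

End BoxCovers.

Section RealInequalities.
Context {R : realDomainType}.

Lemma normr_relu_le (a : R) : `|Num.max a 0| <= `|a|.
Proof. by case: (lerP a 0) => a0; rewrite ?normr0. Qed.

Lemma relu_dist_le (a b : R) : `|Num.max a 0 - Num.max b 0| <= `|a - b|.
Proof.
have := ler_norm (a - b); have := ler_norm (b - a); rewrite distrC.
case: (lerP a 0) => a0; case: (lerP b 0) => b0 *; rewrite ?subrr ?normr0 //.
- by rewrite sub0r normrN gtr0_norm //; lra.
- by rewrite subr0 gtr0_norm //; lra.
Qed.

Lemma ler_distM (a a' b b' : R) :
  `|a * b - a' * b'| <= `|a - a'| * `|b| + `|a'| * `|b - b'|.
Proof.
have -> : a * b - a' * b' = (a - a') * b + a' * (b - b') by ring.
by rewrite -!normrM ler_normD.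
Qed.

Lemma ler_norm_dot (m : nat) (a b : 'I_m -> R) (B A : R) :
  (forall j, `|a j| <= B) -> (forall j, `|b j| <= A) ->
  `|\sum_j a j * b j| <= m%:R * (B * A).
Proof.
move=> aB bA; rewrite -[m in m%:R]card_ord mulr_natl -sumr_const.
apply: le_trans (ler_norm_sum _ _ _) (ler_sum _ _) => j _.
by rewrite normrM ler_pM.
Qed.

Lemma ler_dist_dot (m : nat) (a a' b b' : 'I_m -> R) (B A e e' : R) :
  (forall j, `|a j - a' j| <= e) -> (forall j, `|b j| <= A) ->
  (forall j, `|a' j| <= B) -> (forall j, `|b j - b' j| <= e') ->
  `|\sum_j a j * b j - \sum_j a' j * b' j| <= m%:R * (e * A + B * e').
Proof.
move=> ae bA aB be; rewrite -sumrB -[m in m%:R]card_ord mulr_natl -sumr_const.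
apply: le_trans (ler_norm_sum _ _ _) (ler_sum _ _) => j _.
by apply: le_trans (ler_distM _ _ _ _) _; apply: lerD; apply: ler_pM.
Qed.

End RealInequalities.

Section ReluNetworks.
Variables (R : realType) (L : nat) (n : nat -> nat).
Local Notation param := (mlp_param R L n).

Definition bias_index (l : 'I_L) (i : 'I_(n l.+1)) : mlp_index L n :=
  existT _ (widen_ord (leqnSn L) l) (inr i).

Lemma bias_indexE (w : param) (l : 'I_L) (i : 'I_(n l.+1)) :
  bias w l i = w (bias_index l i).
Proof.
rewrite /bias; case: insubP => [l' _ l'E|]; last by rewrite ltnS ltnW.
have El : l' = widen_ord (leqnSn L) l by apply: val_inj.
subst l'; case: insubP => [i' _ i'E|]; last by rewrite ltn_ord.
by have -> : i' = i by apply: val_inj.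
Qed.

Lemma Wt_coordinate_off (l : 'I_L) (i : 'I_(n l.+1)) m i' j :
  coordinate_off (bias_index l i) (fun w : param => Wt w m i' j).
Proof.
rewrite /Wt; case: insubP => [m' _ _|_]; last by left.
case: insubP => [i'' _ _|_]; last by left.
case: insubP => [j' _ _|_]; last by left.
right; exists (existT _ m' (inl (i'', j'))) => //.
by apply/eqP => /(congr1 (fun t : mlp_index L n => if projT2 t is inl _ then 0 else 1)%N).
Qed.

Lemma bias_coordinate_off (l : 'I_L) (i : 'I_(n l.+1)) m i' : (m < l)%N ->
  coordinate_off (bias_index l i) (fun w : param => bias w m i').
Proof.
move=> ml; rewrite /bias; case: insubP => [m' _ m'E|_]; last by left.
case: insubP => [i'' _ _|_]; last by left.
right; exists (existT _ m' (inr i'')) => //.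
apply/eqP => /(congr1 (fun t : mlp_index L n => val (projT1 t))) /= m'l.
by move: ml; rewrite -m'E (m'l : val m' = l) ltnn.
Qed.

Definition param_bounded (B : R) (k : nat) (w : param) : Prop :=
  (forall m i j, `|Wt w m i j| <= B) /\
  (forall m i, (m < k)%N -> `|bias w m i| <= B).

Definition param_close (d : R) (k : nat) (w v : param) : Prop :=
  (forall m i j, `|Wt w m i j - Wt v m i j| <= d) /\
  (forall m i, (m < k)%N -> `|bias w m i - bias v m i| <= d).

Lemma cube_off_param_bounded {l : 'I_L} {i : 'I_(n l.+1)} {B : R} {w : param} :
  0 <= B -> cube_off (bias_index l i) B w -> param_bounded B l w.
Proof.
move=> B0 wB; split=> [m i' j|m i' ml].
  exact: coordinate_off_bound B0 (Wt_coordinate_off l i m i' j) wB.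
exact: coordinate_off_bound B0 (bias_coordinate_off l i m i' ml) wB.
Qed.

Lemma close_off_param_close {l : 'I_L} {i : 'I_(n l.+1)} {d : R} {w v : param} :
  0 <= d -> close_off (bias_index l i) d w v -> param_close d l w v.
Proof.
move=> d0 wv; split=> [m i' j|m i' ml].
  exact: coordinate_off_dist d0 (Wt_coordinate_off l i m i' j) wv.
exact: coordinate_off_dist d0 (bias_coordinate_off l i m i' ml) wv.
Qed.

Lemma act_lipschitz (x : 'rV[R]_(n 0)) (B : R) (k : nat) : 0 <= B ->
  exists A K : R, [/\ 0 <= A, 0 <= K & forall (w v : param) d, 0 <= d ->
    param_bounded B k w -> param_bounded B k v -> param_close d k w v ->
    forall j, `|act w x k j| <= A /\ `|act w x k j - act v x k j| <= K * d].
Proof.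
move=> B0; elim: k => [|k [A [K [A0 K0 IH]]]].
  exists (\sum_j `|x ord0 j|), 0; split=> // [|w v d _ _ _ _ j].
    exact: sumr_ge0.
  rewrite /= subrr normr0 mul0r; split=> //.
  rewrite /inp; case: insubP => [j' _ _|_]; last by rewrite normr0 sumr_ge0.
  by rewrite (bigD1 j') //= lerDl sumr_ge0.
exists ((n k)%:R * (B * A) + B), ((n k)%:R * (A + B * K) + 1); split.
- by rewrite addr_ge0 // !mulr_ge0.
- by rewrite addr_ge0 // mulr_ge0 // addr_ge0 // mulr_ge0.
move=> w v d d0 [Ww bw] [Wv bv] [Wwv bwv] j.
have IHk := IH w v d d0 (conj Ww (fun m i mk => bw m i (ltnW mk)))
  (conj Wv (fun m i mk => bv m i (ltnW mk)))
  (conj Wwv (fun m i mk => bwv m i (ltnW mk))).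
rewrite /=; split.
  apply: le_trans (normr_relu_le _) _.
  apply: le_trans (ler_normD _ _) (lerD _ (bw k j (ltnSn k))).
  by apply: ler_norm_dot => j'; [exact: Ww | exact: (IHk j').1].
apply: le_trans (relu_dist_le _ _) _.
rewrite opprD addrACA mulrDl mul1r.
apply: le_trans (ler_normD _ _) (lerD _ (bwv k j (ltnSn k))).
have -> : (n k)%:R * (A + B * K) * d = (n k)%:R * (d * A + B * (K * d)) by ring.
by apply: ler_dist_dot => j';
  [exact: Wwv | exact: (IHk j').1 | exact: Wv | exact: (IHk j').2].
Qed.

Lemma preact_null (x : 'rV[R]_(n 0)) (l : 'I_L) (i : 'I_(n l.+1)) :
  lebesgue_null [set w : param | preact w x l.+1 i = 0].
Proof.
pose G (w : param) := - \sum_(j < n l) Wt w l i j * act w x l j.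
apply: (@lebesgue_null_sub _ _ _ [set w | w (bias_index l i) = G w]).
  move=> w; rewrite /= /preact /= bias_indexE /G => /eqP.
  by rewrite addrC addr_eq0 => /eqP.
apply: lipschitz_graph_null => B B0.
have [A [K [A0 K0 actL]]] := act_lipschitz x B l (ltW B0).
exists ((n l)%:R * (A + B * K)); first by rewrite mulr_ge0 // addr_ge0 // mulr_ge0 // ltW.
move=> w v d wB vB d0 wv.
have bv := cube_off_param_bounded (ltW B0) vB.
have cwv := close_off_param_close d0 wv.
have actLj := actL w v d d0 (cube_off_param_bounded (ltW B0) wB) bv cwv.
rewrite /G -opprD normrN.
have -> : (n l)%:R * (A + B * K) * d = (n l)%:R * (d * A + B * (K * d)) by ring.
by apply: ler_dist_dot => j;
  [exact: cwv.1 | exact: (actLj j).1 | exact: bv.1 | exact: (actLj j).2].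
Qed.

End ReluNetworks.

Lemma open_rat_point {R : realType} {m : nat} {U : set 'rV[R]_m} {x : 'rV[R]_m} :
  open U -> U x -> exists q : 'rV[rat]_m, U (map_mx ratr q).
Proof.
move=> oU Ux; have /nbhs_ballP[e e0 eU] : nbhs x U by move: oU; rewrite openE; apply.
have /choice[q qx] : forall j : 'I_m, exists q : rat, ball (x ord0 j) e (ratr q).
  move=> j; have [y [xy [q _ qy]]] :=
    dense_rat (ex_intro _ (x ord0 j) (ballxx _ e0)) (ball_open (x ord0 j) e).
  by exists q; rewrite qy.
exists (\row_j q j); apply: eU; split=> // i j.
by rewrite (ord1 i) !mxE.
Qed.

Theorem mainTheorem2 (R : realType) (L : nat) (n : nat -> nat)
  (hn : forall l, (l <= L.+1)%N -> (0 < n l)%N) :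
  lebesgue_null
    [set w : mlp_param R L n |
      exists l i : nat, [/\ (1 <= l <= L)%N, (i < n l)%N &
        exists U : set 'rV[R]_(n 0%N),
          [/\ open U, (exists x, U x) &
              forall x, U x -> preact w x l i = 0]]].
Proof.
pose i0 : mlp_index L n := existT _ ord0 (inr (Ordinal (hn 1%N isT))).
pose zero_set (t : {l : 'I_L & 'I_(n l.+1)} * 'rV[rat]_(n 0%N)) :=
  [set w : mlp_param R L n | preact w (map_mx ratr t.2) (tag t.1).+1 (tagged t.1) = 0].
apply: (@lebesgue_null_sub _ _ _ (\bigcup_t zero_set t)); last first.
  by apply: (lebesgue_null_bigcup i0) => -[[l i] q]; apply: preact_null.
move=> w [l [i [/andP[l1 lL] il [U [oU [x Ux] U0]]]]].
case: l l1 lL il U0 => [//|l] _ lL il U0.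
have [q Uq] := open_rat_point oU Ux.
by exists (existT _ (Ordinal lL) (Ordinal il), q) => //; apply: U0.
Qed.
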